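(* For every $\alpha\ge1$ there exist reals $0<v_1<\dots<v_n$ and a distribution $\mathcal{D}$ on $\{v_1,\dots,v_n\}$ with full support such that no buyer-optimal signaling scheme for $\mathcal{D}$ is $\alpha$-majorized.
   Context: Values and prior. $v_0:=0$, $f_{\mathcal{D}}$ is the mass function of $\mathcal{D}$, $F_{\mathcal{D}}$ its CDF, and $G_S(p)=\Pr_{v\sim S}[v\ge p]$. Signals and pricing. A signal is a distribution $S$ on $\{v_1,\dots,v_n\}$. The seller posts $p^*_S$, the smallest $v$ in the support of $S$ maximizing $v\,G_S(v)$. The surplus of value $v$ is $cs_v(S)=\mathbb{1}[v\ge p^*_S](v-p^*_S)$. Signaling schemes. A signaling scheme is $\mathcal{Z}=\{(S_q,\gamma_q)\}$ with $\gamma_q\ge0$, $\sum\gamma_q=1$ and $\sum_q\gamma_q f_{S_q}=f_{\mathcal{D}}$. Its expected consumer surplus at $v_i$ is $cs_{v_i}(\mathcal{Z})=\sum_q cs_{v_i}(S_q)\gamma_q f_{S_q}(v_i)/f_{\mathcal{D}}(v_i)$. $\mathcal{Z}$ is buyer-optimal if $\sum_i f_{\mathcal{D}}(v_i)cs_{v_i}(\mathcal{Z})=\sum_i f_{\mathcal{D}}(v_i)v_i-\max_p p\,G_{\mathcal{D}}(p)$. Majorization. The surplus-mass function $s_{\mathcal{Z}}$ on $(0,1]$ equals $cs_{v_i}(\mathcal{Z})$ on $(F_{\mathcal{D}}(v_{i-1}),F_{\mathcal{D}}(v_i)]$. For a finite step function $f$ on $(0,1]$, $\mathrm{Pf}(f,m)=\int_0^m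 f_{\mathrm{sorted}}$, where $f_{\mathrm{sorted}}$ rearranges the steps of $f$ in ascending order. $\mathcal{Z}$ is $\alpha$-majorized if $\alpha\,\mathrm{Pf}(s_{\mathcal{Z}},m)\ge\mathrm{Pf}(s_{\mathcal{Z}'},m)$ for every signaling scheme $\mathcal{Z}'$ for $\mathcal{D}$ and every $m\in(0,1]$. *)

From HB Require Import structures.
From mathcomp Require Import all_boot all_order all_algebra.
From mathcomp Require Import reals.
Set Implicit Arguments. Unset Strict Implicit. Unset Printing Implicit Defensive.
Import Order.TTheory GRing.Theory Num.Theory.
Local Open Scope ring_scope.

(* Values are v : 'I_n -> R (v i is v_{i+1}); distributions on the values
   are mass functions 'I_n -> R. *)
Section Defs.
Variable R : realType.
Variable n : nat.

Definition is_distr (S : 'I_n -> R) : Prop :=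
  (forall i, 0 <= S i) /\ \sum_i S i = 1.

Definition G (v S : 'I_n -> R) (p : R) : R := \sum_(i | p <= v i) S i.

Definition revenue (v S : 'I_n -> R) (p : R) : R := p * G v S p.

Definition opt_in_support (v S : 'I_n -> R) (j : 'I_n) : bool :=
  (0 < S j) && [forall k, (0 < S k) ==> (revenue v S (v k) <= revenue v S (v j))].

Definition price (v S : 'I_n -> R) : R :=
  if [pick j | opt_in_support v S j &&
               [forall k, opt_in_support v S k ==> (v j <= v k)]] is Some j
  then v j else 0.

Definition cs (v S : 'I_n -> R) (i : 'I_n) : R :=
  if price v S <= v i then v i - price v S else 0.

Record scheme := Scheme {
  nsig : nat;
  sig : 'I_nsig -> 'I_n -> R;
  wt : 'I_nsig -> R }.
Arguments sig s _ _ : clear implicits.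
Arguments wt s _ : clear implicits.

Definition is_scheme (f : 'I_n -> R) (Z : scheme) : Prop :=
  (forall q : 'I_(nsig Z), is_distr (sig Z q)) /\
  (forall q : 'I_(nsig Z), 0 <= wt Z q) /\
  \sum_(q < nsig Z) wt Z q = 1 /\
  (forall i, \sum_(q < nsig Z) wt Z q * sig Z q i = f i).

Definition cs_scheme (v f : 'I_n -> R) (Z : scheme) (i : 'I_n) : R :=
  \sum_(q < nsig Z) cs v (sig Z q) i * wt Z q * sig Z q i / f i.

Definition buyer_optimal (v f : 'I_n -> R) (Z : scheme) : Prop :=
  exists p : R, (forall p' : R, revenue v f p' <= revenue v f p) /\
    \sum_i f i * cs_scheme v f Z i = \sum_i f i * v i - revenue v f p.

(* Pf(g, m) for the step function g on (0,1] with consecutive steps of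
   widths w i and values c i: integral over (0,m] of the ascending
   rearrangement.  The steps are sorted by value; the step at position i of
   the sorted list starts at the total width of the preceding steps. *)
Definition Pf (w c : 'I_n -> R) (m : R) : R :=
  let s := sort (fun i j : 'I_n => c i <= c j) (enum 'I_n) in
  \sum_(i <- s) c i *
     Num.min (Num.max (m - \sum_(j <- take (index i s) s) w j) 0) (w i).

Definition Pf_surplus (v f : 'I_n -> R) (Z : scheme) (m : R) : R :=
  Pf f (cs_scheme v f Z) m.

Definition majorized (alpha : R) (v f : 'I_n -> R) (Z : scheme) : Prop :=
  forall Z' : scheme, is_scheme f Z' ->
  forall m : R, 0 < m <= 1 ->
    Pf_surplus v f Z' m <= alpha * Pf_surplus v f Z m.

End Defs.

(* The counterexample has values e < 1 < 1 + d with d = 1/(2 alpha) and e = d^2/2, and a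
   prior for which the prices 1 and 1 + d are both revenue-optimal.  Let
   kappa = v0 (v2 - v1) / v2.  For every signal S, a case analysis on the posted price
   shows S1 cs1(S) + v1 G_S(v1) + v2 G_S(v2) <= 2 (W(S) - CS(S)) + kappa S0, where W is
   the welfare.  In a buyer-optimal scheme W - CS averages to the optimal revenue, which
   equals both v1 G(v1) and v2 G(v2); averaging therefore gives f1 cs_{v1} <= kappa f0.
   Since the lowest value never gets surplus, the lowest f0 + f1 of the surplus-mass
   function carries at most kappa f0.  A three-signal scheme that pools v0 with part of
   v1 at price v0, and part of v1 with v2 at price v1, gives v1 and v2 surpluses whose
   mass on the same interval exceeds alpha kappa f0. *)

From HB Require Import structures.
From mathcomp Require Import all_boot all_order all_algebra.
From mathcomp Require Import reals.
From mathcomp Require Import ring lra.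
Import Order.TTheory GRing.Theory Num.Theory.
Local Open Scope ring_scope.
Set Implicit Arguments. Unset Strict Implicit. Unset Printing Implicit Defensive.

Arguments sig {R n} s _ _.
Arguments wt {R n} s _.

Section Pricing.
Variables (R : realType) (n : nat) (v : 'I_n -> R).
Implicit Types (S : 'I_n -> R) (i j k : 'I_n).

Lemma distr_support S : is_distr S -> exists k, 0 < S k.
Proof.
case=> S_ge0 S_sum; case: (boolP [exists k, 0 < S k]) => [/existsP // | /existsPn S_le0].
have S0 i : S i = 0 by apply/eqP; rewrite eq_le S_ge0 andbT leNgt S_le0.
by move/eqP: S_sum; rewrite big1 // eq_sym oner_eq0.
Qed.

Lemma price_spec S : is_distr S ->
  exists2 j, price v S = v j &
    opt_in_support v S j /\ forall k, opt_in_support v S k -> v j <= v k.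
Proof.
move=> /distr_support [k Sk].
have [j Sj j_max] := @arg_maxP _ _ _ k (fun i => 0 < S i) (fun i => revenue v S (v i)) Sk.
have opt_j : opt_in_support v S j.
  by rewrite /opt_in_support Sj; apply/forallP => i; apply/implyP/j_max.
have [i opt_i i_min] := @arg_minP _ _ _ j (opt_in_support v S) v opt_j.
rewrite /price; case: pickP => [l /andP[opt_l /forallP l_min] | /(_ i)].
  by exists l; split=> // m; apply/implyP: (l_min m).
by rewrite opt_i /= => /negbT/forallPn[m]; rewrite negb_imply => /andP[/i_min -> //].
Qed.

Lemma price_le S j : is_distr S -> opt_in_support v S j -> price v S <= v j.
Proof. by move=> /price_spec[l -> [_ l_min]] /l_min. Qed.

Lemma price_ge_min S i : is_distr S -> (forall k, v i <= v k) -> v i <= price v S.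
Proof. by move=> /price_spec[l -> _] /(_ l). Qed.

Lemma opt_in_supportI S j : 0 < S j ->
  (forall k, revenue v S (v k) <= revenue v S (v j)) -> opt_in_support v S j.
Proof. by move=> Sj j_max; rewrite /opt_in_support Sj; apply/forallP => k; apply/implyP. Qed.

Lemma G_ge0 S p : (forall i, 0 <= S i) -> 0 <= G v S p.
Proof. by move=> S_ge0; apply: sumr_ge0. Qed.

Lemma revenue_le_values S M p : (forall i, 0 <= S i) -> 0 <= M ->
  (forall k, revenue v S (v k) <= M) -> revenue v S p <= M.
Proof.
move=> S_ge0 M_ge0 le_M; case: (pickP (fun i => p <= v i)) => [i p_vi | none].
  have [k p_vk k_min] := @arg_minP _ _ _ i (fun i => p <= v i) v p_vi.
  have -> : revenue v S p = p * G v S (v k).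
    by congr (_ * _); apply: eq_bigl => l; apply/idP/idP => [/k_min | /(le_trans p_vk)].
  by apply: le_trans (le_M k); rewrite ler_wpM2r ?G_ge0.
by rewrite /revenue /G big_pred0 ?mulr0.
Qed.

(* A value outside the support sells to the same buyers as the next support value above. *)
Lemma revenue_le_opt S j k : (forall i, 0 <= S i) -> (forall i, 0 <= v i) ->
  opt_in_support v S j -> revenue v S (v k) <= revenue v S (v j).
Proof.
move=> S_ge0 v_ge0 /andP[Sj /forallP opt_j].
case: (pickP (fun i => (v k <= v i) && (0 < S i))) => [i ki_Si | none].
  have [l /andP[kl Sl] l_min] :=
    @arg_minP _ _ _ i (fun i => (v k <= v i) && (0 < S i)) v ki_Si.
  have G_eq : G v S (v k) = G v S (v l).
    rewrite /G !(big_mkcond (fun i => _ <= v i)); apply: eq_bigr => m _.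
    case: (leP (v l) (v m)) => [lm | ml]; first by rewrite (le_trans kl lm).
    case: ifP => // km; apply/eqP; rewrite eq_le S_ge0 andbT leNgt.
    by apply/negP => Sm; move: (l_min m); rewrite km Sm => /(_ isT); rewrite leNgt ml.
  apply: le_trans (implyP (opt_j l) Sl); rewrite /revenue G_eq ler_wpM2r ?G_ge0 //.
have G0 : G v S (v k) = 0.
  apply: big1 => i ki; apply/eqP; rewrite eq_le S_ge0 andbT leNgt.
  by apply/negP => Si; move: (none i); rewrite ki Si.
by rewrite /revenue G0 mulr0 mulr_ge0 ?G_ge0.
Qed.

Lemma cs_ge0 S i : 0 <= cs v S i.
Proof. by rewrite /cs; case: ifP => // ?; rewrite subr_ge0. Qed.

Lemma cs_ge S i p : price v S <= p -> p <= v i -> v i - p <= cs v S i.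
Proof. by move=> Sp pv; rewrite /cs (le_trans Sp pv) lerD2l lerN2. Qed.

Lemma cs_min_eq0 S i : is_distr S -> (forall k, v i <= v k) -> cs v S i = 0.
Proof.
move=> S_distr i_min; have vi_price := price_ge_min S_distr i_min.
by rewrite /cs; case: ifP => // price_vi; apply/eqP; rewrite subr_eq0 eq_le price_vi vi_price.
Qed.

End Pricing.

Definition welfare_minus_cs (R : realType) (n : nat) (v S : 'I_n -> R) : R :=
  \sum_i S i * (v i - cs v S i).

Section Schemes.
Variables (R : realType) (n : nat) (v f : 'I_n -> R) (Z : scheme R n).
Hypothesis Z_scheme : is_scheme f Z.

Lemma cs_scheme_ge0 i : (forall i, 0 <= f i) -> 0 <= cs_scheme v f Z i.
Proof.
have [sig_distr [wt_ge0 _]] := Z_scheme; move=> f_ge0.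
apply: sumr_ge0 => q _; rewrite divr_ge0 // !mulr_ge0 ?cs_ge0 //.
by have [] := sig_distr q.
Qed.

Lemma cs_scheme_min_eq0 i : (forall k, v i <= v k) -> cs_scheme v f Z i = 0.
Proof.
have [sig_distr _] := Z_scheme; move=> i_min.
by apply: big1 => q _; rewrite (cs_min_eq0 (sig_distr q) i_min) !mul0r.
Qed.

Hypothesis f_gt0 : forall i, 0 < f i.

Lemma mulr_cs_scheme i :
  f i * cs_scheme v f Z i = \sum_q wt Z q * (sig Z q i * cs v (sig Z q) i).
Proof.
rewrite mulr_sumr; apply: eq_bigr => q _.
by field; rewrite gt_eqF.
Qed.

Lemma cs_scheme_ge_signal q i :
  wt Z q * (sig Z q i * cs v (sig Z q) i) <= f i * cs_scheme v f Z i.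
Proof.
have [sig_distr [wt_ge0 _]] := Z_scheme.
rewrite mulr_cs_scheme (bigD1 q) //= lerDl; apply: sumr_ge0 => r _.
by rewrite !mulr_ge0 ?cs_ge0 //; have [] := sig_distr r.
Qed.

Lemma sum_welfare_minus_cs :
  \sum_q wt Z q * welfare_minus_cs v (sig Z q) =
  \sum_i f i * v i - \sum_i f i * cs_scheme v f Z i.
Proof.
have [_ [_ [_ mix]]] := Z_scheme.
under eq_bigr do rewrite /welfare_minus_cs mulr_sumr.
rewrite exchange_big -sumrB; apply: eq_bigr => i _.
rewrite mulr_cs_scheme -mix mulr_suml -sumrB; apply: eq_bigr => q _; ring.
Qed.

End Schemes.

Local Notation o0 := (@Ordinal 3 0 isT).
Local Notation o1 := (@Ordinal 3 1 isT).
Local Notation o2 := (@Ordinal 3 2 isT).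

Lemma ord3_ind (P : 'I_3 -> Prop) : P o0 -> P o1 -> P o2 -> forall i, P i.
Proof. by move=> P0 P1 P2 [[|[|[|//]]] lt_i3]; rewrite (bool_irrelevance lt_i3 isT). Qed.

Lemma sum_ord3 (V : nmodType) (F : 'I_3 -> V) : \sum_i F i = F o0 + F o1 + F o2.
Proof.
rewrite !big_ord_recr big_ord0 Monoid.simpm /=.
by congr (F _ + F _ + F _); apply: val_inj.
Qed.

Section ThreeValues.
Variables (R : realType) (v : 'I_3 -> R).
Hypotheses (v0_gt0 : 0 < v o0) (v01 : v o0 < v o1) (v12 : v o1 < v o2).

Let v02 : v o0 < v o2. Proof. exact: lt_trans v01 v12. Qed.
Let v2_gt0 : 0 < v o2. Proof. exact: lt_trans v0_gt0 v02. Qed.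

Lemma v0_min k : v o0 <= v k.
Proof. by move: k; apply: ord3_ind; rewrite ?lexx ?ltW. Qed.

Lemma v_ge0 k : 0 <= v k.
Proof. exact: le_trans (ltW v0_gt0) (v0_min k). Qed.

Lemma v_increasing : {homo v : i j / (i < j)%N >-> i < j}.
Proof. by apply: ord3_ind; apply: ord3_ind => // _; rewrite ?v01 ?v02 ?v12. Qed.

Lemma G_v0 S : G v S (v o0) = S o0 + S o1 + S o2.
Proof. by rewrite /G big_mkcond sum_ord3 /= lexx (ltW v01) (ltW v02). Qed.

Lemma G_v1 S : G v S (v o1) = S o1 + S o2.
Proof. by rewrite /G big_mkcond sum_ord3 /= lexx (lt_geF v01) (ltW v12) add0r. Qed.

Lemma G_v2 S : G v S (v o2) = S o2.
Proof. by rewrite /G big_mkcond sum_ord3 /= lexx (lt_geF v12) (lt_geF v02) !add0r. Qed.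

Definition kappa : R := v o0 * (v o2 - v o1) / v o2.

Lemma kappa_ge0 : 0 <= kappa.
Proof. by rewrite /kappa divr_ge0 ?mulr_ge0 ?subr_ge0 ?(ltW v0_gt0) ?(ltW v12) ?(ltW v2_gt0). Qed.

(* The right-hand side is a nonnegative combination of the two revenue constraints of
   price v0; kappa is exactly what makes the coefficients of s1 and s2 match. *)
Lemma low_price_bound s0 s1 s2 : s0 + s1 + s2 = 1 ->
  v o1 * (s1 + s2) <= v o0 -> v o2 * s2 <= v o0 ->
  s1 * (v o1 - v o0) + v o1 * (s1 + s2) + v o2 * s2 <= 2 * v o0 + kappa * s0.
Proof.
move=> s_sum rev1 rev2.
have coef1 : 0 <= 2 - v o0 / v o2.
  by rewrite subr_ge0 ler_pdivrMr //; have := v02; have := v2_gt0; lra.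
have coef2 : 0 <= 1 + (v o0 - v o1) / v o2.
  rewrite -(divff (lt0r_neq0 v2_gt0)) -mulrDl divr_ge0 ?(ltW v2_gt0) //.
  by have := v0_gt0; have := v12; lra.
rewrite -subr_ge0.
have -> : 2 * v o0 + kappa * s0 - (s1 * (v o1 - v o0) + v o1 * (s1 + s2) + v o2 * s2) =
    (2 - v o0 / v o2) * (v o0 - v o1 * (s1 + s2)) +
    (1 + (v o0 - v o1) / v o2) * (v o0 - v o2 * s2).
  rewrite /kappa (_ : s0 = 1 - s1 - s2); last by rewrite -s_sum; ring.
  by field; exact: lt0r_neq0.
by rewrite addr_ge0 // mulr_ge0 // subr_ge0.
Qed.

Lemma signal_surplus_bound S : is_distr S ->
  S o1 * cs v S o1 + v o1 * (S o1 + S o2) + v o2 * S o2 <=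
  2 * welfare_minus_cs v S + kappa * S o0.
Proof.
move=> S_distr; have [S_ge0 S_sum] := S_distr; rewrite sum_ord3 in S_sum.
have [j price_j [opt_j _]] := price_spec v S_distr.
have rev_le k := revenue_le_opt k S_ge0 v_ge0 opt_j.
have := mulr_ge0 kappa_ge0 (S_ge0 o0); have := mulr_ge0 (S_ge0 o0) (v_ge0 o0).
have := mulr_ge0 (S_ge0 o1) (v_ge0 o1).
have := mulr_ge0 (S_ge0 o2) (eqbRL (subr_ge0 _ _) (ltW v12)).
rewrite /welfare_minus_cs sum_ord3 /cs price_j.
move: j {price_j opt_j} rev_le; apply: ord3_ind => rev_le.
- have := rev_le o1; have := rev_le o2.
  rewrite /revenue G_v0 G_v1 G_v2 S_sum mulr1 => rev2 rev1.
  have := low_price_bound S_sum rev1 rev2.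
  have : v o0 * (S o0 + S o1 + S o2) = v o0 by rewrite S_sum mulr1.
  rewrite lexx (ltW v01) (ltW v02) subrr; lra.
- have := rev_le o2; rewrite /revenue G_v1 G_v2 lexx (ltW v12) (lt_geF v01) subrr.
  lra.
- rewrite lexx (lt_geF v02) (lt_geF v12) subrr; lra.
Qed.

Lemma scheme_surplus_bound f (Z : scheme R 3) :
  (forall i, 0 < f i) -> is_scheme f Z -> buyer_optimal v f Z ->
  (forall p, revenue v f p <= v o1 * (f o1 + f o2)) ->
  (forall p, revenue v f p <= v o2 * f o2) ->
  f o1 * cs_scheme v f Z o1 <= kappa * f o0.
Proof.
move=> f_gt0 Z_scheme [p [_ buyer_opt]] le_rev1 le_rev2.
have [sig_distr [wt_ge0 [_ mix]]] := Z_scheme.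
have := ler_sum (index_enum _) (P := xpredT)
  (fun q _ => ler_wpM2l (wt_ge0 q) (signal_surplus_bound (sig_distr q))).
have -> : \sum_q wt Z q * (sig Z q o1 * cs v (sig Z q) o1 +
      v o1 * (sig Z q o1 + sig Z q o2) + v o2 * sig Z q o2) =
    f o1 * cs_scheme v f Z o1 + v o1 * (f o1 + f o2) + v o2 * f o2.
  rewrite mulr_cs_scheme // -!mix -big_split !mulr_sumr -!big_split /=.
  by apply: eq_bigr => q _; ring.
have -> : \sum_q wt Z q * (2 * welfare_minus_cs v (sig Z q) + kappa * sig Z q o0) =
    2 * revenue v f p + kappa * f o0.
  have sum_W : \sum_q wt Z q * welfare_minus_cs v (sig Z q) = revenue v f p.
    by rewrite (sum_welfare_minus_cs v Z_scheme f_gt0) buyer_opt; ring.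
  rewrite -sum_W -(mix o0) !mulr_sumr -big_split /=.
  by apply: eq_bigr => q _; ring.
by have := le_rev1 p; have := le_rev2 p; lra.
Qed.

End ThreeValues.

Lemma min_max_subr (R : realDomainType) (m a b : R) : 0 <= m -> 0 <= a -> 0 <= b ->
  Num.min (Num.max (m - a) 0) b = Num.min m (a + b) - Num.min m a.
Proof.
move=> m_ge0 a_ge0 b_ge0.
repeat match goal with
  | |- context [Num.max ?x ?y] => case: (leP x y) => ?
  | |- context [Num.min ?x ?y] => case: (leP x y) => ?
  end; lra.
Qed.

Definition is_allocation (R : realType) n (w a : 'I_n -> R) (m : R) : Prop :=
  (forall i, 0 <= a i <= w i) /\ \sum_i a i = m.

Section Rearrangement3.
Variable R : realType.
Implicit Types (w c a : 'I_3 -> R).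

Lemma Pf_ord3E w c m : (forall i, 0 <= w i) -> 0 <= m <= \sum_i w i ->
  exists x y z : 'I_3,
  [/\ forall F : 'I_3 -> R, \sum_i F i = F x + F y + F z,
      uniq [:: x; y; z], c x <= c y, c y <= c z &
      Pf w c m = c x * Num.min m (w x)
               + c y * (Num.min m (w x + w y) - Num.min m (w x))
               + c z * (m - Num.min m (w x + w y))].
Proof.
move=> w_ge0 /andP[m_ge0 m_le].
have enum3 : enum 'I_3 = [:: o0; o1; o2] by apply: (inj_map val_inj); rewrite val_enum_ord.
have s_perm : perm_eq (sort (fun i j => c i <= c j) (enum 'I_3)) [:: o0; o1; o2].
  by rewrite perm_sort enum3.
have s_sorted := sort_sorted (fun i j : 'I_3 => le_total (c i) (c j)) (enum 'I_3).
rewrite /Pf; move: (sort _ _) s_perm s_sorted => s s_perm.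
have s_uniq : uniq s by rewrite (perm_uniq s_perm).
case: s s_perm s_uniq (perm_size s_perm) => [|x [|y [|z [|]]]] // s_perm xyz_uniq _.
move: (xyz_uniq); rewrite /= !inE !negb_or => /and3P[/andP[xy xz] yz _] /andP[cxy /andP[cyz _]].
have sum_xyz (F : 'I_3 -> R) : \sum_i F i = F x + F y + F z.
  rewrite sum_ord3; move: (perm_big (op := +%R) (x := 0) (P := xpredT) (F := F) _ s_perm).
  by rewrite !big_cons !big_nil /= !addr0 !addrA.
exists x, y, z; split=> //.
rewrite !big_cons big_nil /= !eqxx (negbTE xy) (negbTE xz) (negbTE yz) /=.
rewrite !big_cons !big_nil subr0 !addr0 addrA (elimT max_idPl m_ge0).
rewrite !min_max_subr ?addr_ge0 // -addrA.
by rewrite (elimT min_idPl (_ : m <= w x + w y + w z)) ?addrA // -sum_xyz.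
Qed.

Lemma Pf_ord3_le_allocation w c m a : (forall i, 0 <= w i) -> is_allocation w a m ->
  Pf w c m <= \sum_i c i * a i.
Proof.
move=> w_ge0 [a_bnd a_sum].
have a_ge0 i : 0 <= a i by case/andP: (a_bnd i).
have m_bnd : 0 <= m <= \sum_i w i.
  by rewrite -a_sum sumr_ge0 ?ler_sum // => i _; case/andP: (a_bnd i).
have [x [y [z [sum_xyz _ cxy cyz ->]]]] := Pf_ord3E c w_ge0 m_bnd.
rewrite sum_xyz; rewrite sum_xyz in a_sum.
have := a_ge0 x; have := a_ge0 y; have := a_ge0 z.
have /andP[_ axw] := a_bnd x; have /andP[_ ayw] := a_bnd y => ? ? ?.
have ax_le : a x - Num.min m (w x) <= 0 by rewrite subr_le0 le_min axw andbT; lra.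
have axy_le : a x + a y - Num.min m (w x + w y) <= 0.
  by rewrite subr_le0 le_min lerD // andbT; lra.
have := mulr_le0 (eqbRL (subr_le0 _ _) cxy) ax_le.
have := mulr_le0 (eqbRL (subr_le0 _ _) cyz) axy_le.
have : c z * m = c z * (a x + a y + a z) by rewrite a_sum.
lra.
Qed.

Lemma Pf_ord3_allocation w c m : (forall i, 0 <= w i) -> 0 <= m <= \sum_i w i ->
  exists2 a, is_allocation w a m & Pf w c m = \sum_i c i * a i.
Proof.
move=> w_ge0 m_bnd; have [x [y [z [sum_xyz xyz_uniq _ _ ->]]]] := Pf_ord3E c w_ge0 m_bnd.
move: xyz_uniq; rewrite /= !inE !negb_or => /and3P[/andP[xy xz] yz _].
have m_le : m <= w x + w y + w z by rewrite -sum_xyz; case/andP: m_bnd.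
have := w_ge0 x; have := w_ge0 y; have := w_ge0 z; case/andP: m_bnd => m_ge0 _ ? ? ?.
set P1 := Num.min m (w x); set P2 := Num.min m (w x + w y).
pose a k := if k == x then P1 else if k == y then P2 - P1 else if k == z then m - P2 else 0.
have [ax ay az] : [/\ a x = P1, a y = P2 - P1 & a z = m - P2].
  by rewrite /a !eqxx ![_ == x]eq_sym [z == y]eq_sym (negbTE xy) (negbTE xz) (negbTE yz).
exists a; last by rewrite sum_xyz ax ay az.
split; last by rewrite sum_xyz ax ay az; ring.
have P_bnd : [/\ 0 <= P1 <= w x, 0 <= P2 - P1 <= w y & 0 <= m - P2 <= w z].
  by rewrite /P1 /P2; case: (leP m (w x)); case: (leP m (w x + w y)) => *; split; lra.
case: P_bnd => ? ? ? k; rewrite /a.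
by do 3?[case: eqP => [-> // | _]]; rewrite lexx w_ge0.
Qed.

Lemma Pf_ord3_le w c : (forall i, 0 <= w i) ->
  Pf w c (w o0 + w o1) <= c o0 * w o0 + c o1 * w o1.
Proof.
move=> w_ge0; pose a k := if k == o2 then 0 else w k.
have a_alloc : is_allocation w a (w o0 + w o1).
  split; first by apply: ord3_ind; rewrite /a /= ?lexx ?w_ge0.
  by rewrite sum_ord3 /a /= addr0.
apply: le_trans (Pf_ord3_le_allocation c w_ge0 a_alloc) _.
by rewrite sum_ord3 /a /= mulr0 addr0.
Qed.

Lemma Pf_ord3_ge w c : (forall i, 0 <= w i) -> (forall i, 0 <= c i) ->
  Num.min (c o1) (c o2) * w o1 <= Pf w c (w o0 + w o1).
Proof.
move=> w_ge0 c_ge0.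
have m_bnd : 0 <= w o0 + w o1 <= \sum_i w i.
  by rewrite sum_ord3 addr_ge0 ?lerDl ?w_ge0.
have [a [a_bnd a_sum] ->] := Pf_ord3_allocation c w_ge0 m_bnd.
rewrite sum_ord3 in a_sum; rewrite sum_ord3; set g := Num.min (c o1) (c o2).
have g_ge0 : 0 <= g by rewrite le_min !c_ge0.
have g_le1 : g <= c o1 by rewrite ge_min lexx.
have g_le2 : g <= c o2 by rewrite ge_min lexx orbT.
have /andP[a0_ge0 a0_le] := a_bnd o0; have /andP[a1_ge0 _] := a_bnd o1.
have /andP[a2_ge0 _] := a_bnd o2.
have := mulr_ge0 (c_ge0 o0) a0_ge0; have := mulr_ge0 g_ge0 (eqbRL (subr_ge0 _ _) a0_le).
have := mulr_ge0 (eqbRL (subr_ge0 _ _) g_le1) a1_ge0.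
have := mulr_ge0 (eqbRL (subr_ge0 _ _) g_le2) a2_ge0.
have : g * (a o0 + a o1 + a o2) = g * (w o0 + w o1) by rewrite a_sum.
lra.
Qed.

End Rearrangement3.

Section Example.
Variables (R : realType) (d : R).
Hypotheses (d_gt0 : 0 < d) (d_le : d <= 1 / 2).
(* lra does not see section hypotheses, so they are put in the goal where needed. *)

Local Notation e := (d ^+ 2 / 2).
Local Notation beta := (1 / 2 - d / 4).

(* Signal o0 pools all of v0 with just enough of v1 that the seller is indifferent
   between prices v0 and v1, signal o1 mixes v1 and v2 so that prices v1 and v2 tie, and
   signal o2 is pure v2.  The prior is the resulting mixture, tuned so that prices v1
   and v2 also tie for the prior itself. *)
Definition cex_values (i : 'I_3) : R := nth 0 [:: e; 1; 1 + d] i.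

Definition cex_prior (i : 'I_3) : R :=
  nth 0 [:: (1 - e) / 2; e / 2 + beta * d / (1 + d); beta / (1 + d) + d / 4] i.

Definition cex_signal (q i : 'I_3) : R :=
  nth 0 (nth [::] [:: [:: 1 - e; e; 0]; [:: 0; d / (1 + d); 1 / (1 + d)]; [:: 0; 0; 1]] q) i.

Definition cex_weight (q : 'I_3) : R := nth 0 [:: 1 / 2; beta; d / 4] q.

Definition cex_scheme : scheme R 3 := Scheme cex_signal cex_weight.

Let e_gt0 : 0 < e. Proof. by rewrite divr_gt0 ?exprn_gt0. Qed.
Let e_le : e <= 1 / 8.
Proof. by rewrite expr2; have := ler_wpM2l (ltW d_gt0) d_le; have := d_le; lra. Qed.
Let d1_gt0 : 0 < 1 + d. Proof. by rewrite addr_gt0. Qed.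
Let d1_neq0 : 1 + d != 0. Proof. exact: lt0r_neq0. Qed.

Lemma cex_values_gt0 : 0 < cex_values o0.
Proof. exact: e_gt0. Qed.

Lemma cex_values01 : cex_values o0 < cex_values o1.
Proof. by have := e_le; rewrite /cex_values /=; lra. Qed.

Lemma cex_values12 : cex_values o1 < cex_values o2.
Proof. by rewrite /cex_values /= ltrDl. Qed.

Lemma cex_prior_gt0 i : 0 < cex_prior i.
Proof.
have beta_gt0 : 0 < beta by have := d_le; lra.
have := divr_gt0 (mulr_gt0 beta_gt0 d_gt0) d1_gt0; have := divr_gt0 beta_gt0 d1_gt0.
have := e_gt0; have := e_le; have := d_gt0.
by move: i; apply: ord3_ind; rewrite /cex_prior /= => *; lra.
Qed.

Lemma cex_prior_sum : \sum_i cex_prior i = 1.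
Proof. by rewrite sum_ord3 /cex_prior /=; field. Qed.

Let v01 := cex_values01.
Let v12 := cex_values12.

Lemma cex_revenue_tie :
  cex_values o2 * cex_prior o2 = cex_values o1 * (cex_prior o1 + cex_prior o2).
Proof. by rewrite /cex_values /cex_prior /=; field. Qed.

Lemma cex_revenue_le p : revenue cex_values cex_prior p <= cex_values o2 * cex_prior o2.
Proof.
have f_ge0 i := ltW (cex_prior_gt0 i).
apply: revenue_le_values => //; first by rewrite mulr_ge0 ?f_ge0 // ltW // (lt_trans v01 v12).
apply: ord3_ind; rewrite /revenue ?(G_v0 v01 v12) ?(G_v1 v01 v12) ?(G_v2 v01 v12).
- rewrite -sum_ord3 cex_prior_sum mulr1 /cex_values /cex_prior /=.
  rewrite (_ : (1 + d) * (beta / (1 + d) + d / 4) = beta + d * (1 + d) / 4); last by field.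
  have := e_le; have := d_le; have := mulr_ge0 (ltW d_gt0) (ltW d1_gt0).
  lra.
- by rewrite cex_revenue_tie.
- by [].
Qed.

Lemma cex_signal_distr q : is_distr (cex_signal q).
Proof.
have := e_le; have := e_gt0 => ? ?.
have := divr_gt0 d_gt0 d1_gt0; have := divr_gt0 ltr01 d1_gt0 => ? ?.
split; last by move: q; apply: ord3_ind; rewrite sum_ord3 /cex_signal /=; field.
by move: q; apply: ord3_ind; apply: ord3_ind; rewrite /cex_signal /=; lra.
Qed.

Lemma cex_scheme_valid : is_scheme cex_prior cex_scheme.
Proof.
split; first exact: cex_signal_distr.
have := d_le; have := d_gt0 => ? ?.
split; first by apply: ord3_ind; rewrite /= /cex_weight /=; lra.
split; first by rewrite /= sum_ord3 /cex_weight /=; field.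
by apply: ord3_ind; rewrite /= sum_ord3 /cex_weight /cex_signal /cex_prior /=; field.
Qed.

Lemma cex_cs_pool_low : cex_values o1 - cex_values o0 <= cs cex_values (cex_signal o0) o1.
Proof.
apply: cs_ge; last exact: ltW.
apply: price_le (cex_signal_distr o0) _; apply: opt_in_supportI.
  by have := e_le; rewrite /cex_signal /=; lra.
apply: ord3_ind; rewrite /revenue ?(G_v0 v01 v12) ?(G_v1 v01 v12) ?(G_v2 v01 v12).
all: by rewrite /cex_values /cex_signal /=; have := e_gt0; lra.
Qed.

Lemma cex_cs_pool_high : cex_values o2 - cex_values o1 <= cs cex_values (cex_signal o1) o2.
Proof.
apply: cs_ge; last exact: ltW.
apply: price_le (cex_signal_distr o1) _; apply: opt_in_supportI.
  by rewrite /cex_signal /= divr_gt0.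
have sum1 : d / (1 + d) + 1 / (1 + d) = 1 by field.
have mass2 : (1 + d) * (1 / (1 + d)) = 1 by field.
apply: ord3_ind; rewrite /revenue ?(G_v0 v01 v12) ?(G_v1 v01 v12) ?(G_v2 v01 v12).
all: by rewrite /cex_values /cex_signal /= ?add0r sum1 ?mass2 !mulr1 ?lexx //; have := e_le; lra.
Qed.

Lemma cex_surplus_v1 :
  e * (1 - e) / 2 <= cex_prior o1 * cs_scheme cex_values cex_prior cex_scheme o1.
Proof.
apply: le_trans _ (cs_scheme_ge_signal cex_values cex_scheme_valid cex_prior_gt0 o0 o1).
rewrite /= (_ : cex_weight o0 = 1 / 2) // (_ : cex_signal o0 o1 = e) //.
rewrite (_ : e * (1 - e) / 2 = 1 / 2 * (e * (1 - e))); last by ring.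
apply: ler_wpM2l; first by rewrite divr_ge0.
apply: ler_wpM2l; first exact: ltW.
exact: cex_cs_pool_low.
Qed.

Lemma cex_surplus_v2 :
  d ^+ 2 * beta / (1 + d) <= cex_prior o1 * cs_scheme cex_values cex_prior cex_scheme o2.
Proof.
have f1E : cex_prior o1 = d * cex_prior o2 by rewrite /cex_prior /=; field.
rewrite (_ : d ^+ 2 * beta / (1 + d) = d * (beta * (1 / (1 + d) * d))); last by field.
rewrite f1E -[d * cex_prior o2 * _]mulrA.
apply: ler_wpM2l; first exact: ltW.
apply: le_trans _ (cs_scheme_ge_signal cex_values cex_scheme_valid cex_prior_gt0 o1 o2).
rewrite /= (_ : cex_weight o1 = beta) // (_ : cex_signal o1 o2 = 1 / (1 + d)) //.
apply: ler_wpM2l; first by have := d_le; lra.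
apply: ler_wpM2l; first by rewrite divr_ge0 // ltW.
have := cex_cs_pool_high; rewrite /cex_values /=; congr (_ <= _); ring.
Qed.

Lemma cex_kappa : (2 * d)^-1 * (kappa cex_values * cex_prior o0) = e * (1 - e) / 4 / (1 + d).
Proof. by rewrite /kappa /cex_values /cex_prior /=; field; rewrite d1_neq0 lt0r_neq0. Qed.

Lemma cex_gap : (2 * d)^-1 * (kappa cex_values * cex_prior o0) <
  Num.min (cs_scheme cex_values cex_prior cex_scheme o1)
          (cs_scheme cex_values cex_prior cex_scheme o2) * cex_prior o1.
Proof.
rewrite cex_kappa minr_pMl ?(ltW (cex_prior_gt0 _)) // lt_min ![_ * cex_prior o1]mulrC.
have := e_gt0; have := e_le; have := d_gt0 => ? ? ?.
apply/andP; split; [apply: lt_le_trans cex_surplus_v1 | apply: lt_le_trans cex_surplus_v2].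
- rewrite ltr_pdivrMr // -subr_gt0.
  have -> : e * (1 - e) / 2 * (1 + d) - e * (1 - e) / 4 = e * (1 - e) * (1 + 2 * d) / 4 by field.
  by rewrite !divr_gt0 ?mulr_gt0 //; lra.
- rewrite ltr_pM2r ?invr_gt0 // -subr_gt0.
  have -> : d ^+ 2 * beta - e * (1 - e) / 4 = d ^+ 2 * (beta - (1 - e) / 8) by field.
  by rewrite mulr_gt0 ?exprn_gt0 //; have := d_le; lra.
Qed.

Lemma cex_not_majorized Z : is_scheme cex_prior Z -> buyer_optimal cex_values cex_prior Z ->
  ~ majorized (2 * d)^-1 cex_values cex_prior Z.
Proof.
move=> Z_scheme Z_opt major.
have f_ge0 i := ltW (cex_prior_gt0 i).
have upper : Pf_surplus cex_values cex_prior Z (cex_prior o0 + cex_prior o1) <=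
             kappa cex_values * cex_prior o0.
  apply: le_trans (Pf_ord3_le _ f_ge0) _.
  rewrite (cs_scheme_min_eq0 Z_scheme (v0_min v01 v12)) mul0r add0r mulrC.
  apply: (scheme_surplus_bound cex_values_gt0 v01 v12 cex_prior_gt0 Z_scheme Z_opt) => p.
    by rewrite -cex_revenue_tie cex_revenue_le.
  exact: cex_revenue_le.
have lower := Pf_ord3_ge f_ge0 (fun i => cs_scheme_ge0 cex_values cex_scheme_valid i f_ge0).
have m_bnd : 0 < cex_prior o0 + cex_prior o1 <= 1.
  by rewrite -cex_prior_sum sum_ord3 lerDl f_ge0 andbT addr_gt0 ?cex_prior_gt0.
have := le_trans lower (major _ cex_scheme_valid _ m_bnd).
apply/negP; rewrite -ltNge; apply: le_lt_trans cex_gap.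
by rewrite ler_wpM2l // invr_ge0 mulr_ge0 // ltW.
Qed.

End Example.

Theorem theorem3 (R : realType) (alpha : R) : 1 <= alpha ->
  exists (n : nat) (v f : 'I_n -> R),
    (forall i, 0 < v i) /\
    (forall i j : 'I_n, (i < j)%N -> v i < v j) /\
    (forall i, 0 < f i) /\ \sum_i f i = 1 /\
    forall Z : scheme R n, is_scheme f Z -> buyer_optimal v f Z ->
      ~ majorized alpha v f Z.
Proof.
move=> alpha_ge1; pose d := (2 * alpha)^-1.
have alpha2_gt0 : 0 < 2 * alpha by lra.
have d_gt0 : 0 < d by rewrite invr_gt0.
have d_le : d <= 1 / 2.
  have : d * (2 * alpha) = 1 by rewrite mulVf // lt0r_neq0.
  nra.
have -> : alpha = (2 * d)^-1 by rewrite /d; field; rewrite gt_eqF //; lra.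
have v01 := cex_values01 d_gt0 d_le; have v12 := cex_values12 d_gt0.
exists 3%N, (cex_values d), (cex_prior d); split.
  by move=> i; apply: lt_le_trans (cex_values_gt0 d_gt0) (v0_min v01 v12 i).
split; first exact: v_increasing.
split; first exact: cex_prior_gt0.
split; first exact: cex_prior_sum.
exact: cex_not_majorized.
Qed.
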